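(* Let $K,L,F,Z,S$ be positive integers with $L\le K$, and suppose a $(K,L,F,Z,S)$ extended placement delivery array (EPDA) exists. Then for every positive integer $N$ there exists a $(K,L,M,N)$ multi-antenna coded caching scheme with $\frac{M}{N}=\frac{Z}{F}$ and subpacketization number $F$, in which the server can meet any demand vector $\mathbf{d}=(d_1,\dots,d_K)\in[N]^K$ with delivery time $T=\frac{S}{F}$.
   Context: Notation: $[n]=\{1,\dots,n\}$. EPDA: Let $K,L\ (\le K),F,Z,S$ be positive integers. An $F\times K$ array $\mathbf{A}=[a_{j,k}]$, $j\in[F]$, $k\in[K]$, whose entries are either a special symbol $\star$ or integers in $[S]$, is a $(K,L,F,Z,S)$ EPDA if: (C1) $\star$ appears exactly $Z$ times in each column; (C2) every integer in $[S]$ occurs at least once in $\mathbf{A}$; (C3) no integer appears more than once in any column; (C4) for each $s\in[S]$, let $\mathbf{A}^{(s)}$ be the subarray obtained by deleting all rows and all columns of $\mathbf{A}$ that do not contain $s$; then no row of $\mathbf{A}^{(s)}$ contains more than $L$ integer entries (of any value). $(K,L,M,N)$ multi-antenna coded caching system: a server holds $N$ files $W_1,\dots,W_N$, each of size one unit, and has $L$ transmit antennas; it serves $K$ single-antenna users over a MISO broadcast channel of capacity one file per unit time. User $k$ has a cache of size $M$ units ($0\le M\le N$). In the placement phase (before demands are known) the server fills caches with uncoded file content; $\mathcal{Z}_k$ denotes the content of cache $k$. In the delivery phase each user $k$ requests file $W_{d_k}$; the server sends vectors $\mathbf{x}(\tau)\in\mathbb{C}^L$, and user $k$ receives $y_k(\tau)=\mathbf{h}_k^T\mathbf{x}(\tau)+w_k(\tau)$,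 where $\mathbf{h}_k\in\mathbb{C}^L$ is user $k$'s channel vector; all nodes know all channel vectors perfectly, and the high-SNR regime is considered, i.e. the noise $w_k$ is neglected. A scheme is correct if each user $k$ can recover $W_{d_k}$ from $\mathcal{Z}_k$ and its received signals, for every demand vector. The subpacketization number is the number of equal-size subfiles into which each file is split; if each file is split into $F$ subfiles and the delivery consists of $S'$ transmissions each carrying (precoded combinations of) subfiles of size $1/F$, the delivery time is $T=S'/F$. The channel vectors are taken to be in general position (generic), so that for any set of at most $L-1$ users and a further user there is a vector in $\mathbb{C}^L$ orthogonal to the channels of the former but not of the latter. *)

From HB Require Import structures.
From mathcomp Require Import all_boot all_order all_algebra.
Set Implicit Arguments. Unset Strict Implicit. Unset Printing Implicit Defensive.
Import Order.TTheory GRing.Theory Num.Theory.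
Local Open Scope ring_scope.

(* An F x K array; entry [A j k] is [None] for the star symbol and          *)
(* [Some s] (s : 'I_S, representing the integer s+1 of [S]) otherwise.     *)
Definition EPDA (K L F Z S : nat) (A : 'I_F -> 'I_K -> option 'I_S) : Prop :=
  [/\
      (forall k : 'I_K, #|[set j : 'I_F | A j k == None]| = Z)%N,
      (forall s : 'I_S, exists j k, A j k = Some s),
      (forall (k : 'I_K) (j j' : 'I_F) (s : 'I_S),
          A j k = Some s -> A j' k = Some s -> j = j') &
      (* C4: in the subarray A^(s) (rows and columns containing s), every row
         has at most L integer entries *)
      (forall (s : 'I_S) (j : 'I_F), (exists k, A j k = Some s) ->
          #|[set k : 'I_K | [exists j' : 'I_F, A j' k == Some s]
                             && (A j k != None)]| <= L)%N].

(* Files W_1..W_N, each split into F subfiles; a subfile is a symbol of the *)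
(* field C (the same linear scheme is applied symbol-wise to packets).     *)

Definition dotC (C : fieldType) (L : nat) (h x : 'rV[C]_L) : C :=
  \sum_(i < L) h 0 i * x 0 i.

Definition general_position (C : fieldType) (K L : nat)
    (h : 'I_K -> 'rV[C]_L) : Prop :=
  forall (U : {set 'I_K}) (k : 'I_K), (#|U| <= L.-1)%N -> k \notin U ->
    exists v : 'rV[C]_L,
      (forall u, u \in U -> dotC (h u) v = 0) /\ dotC (h k) v != 0.

Definition transmit (C : fieldType) (N F S L : nat)
    (V : 'I_S -> 'I_N -> 'I_F -> 'rV[C]_L)
    (W : 'I_N -> 'I_F -> C) (t : 'I_S) : 'rV[C]_L :=
  \sum_(n < N) \sum_(j < F) W n j *: V t n j.

Definition cache_content (C : fieldType) (K N F : nat)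
    (Zc : 'I_K -> {set 'I_N * 'I_F}) (k : 'I_K)
    (W : 'I_N -> 'I_F -> C) : 'I_N * 'I_F -> C :=
  fun p => if p \in Zc k then W p.1 p.2 else 0.

Definition decodable (C : fieldType) (K L N F S : nat)
    (Zc : 'I_K -> {set 'I_N * 'I_F}) (h : 'I_K -> 'rV[C]_L)
    (V : 'I_S -> 'I_N -> 'I_F -> 'rV[C]_L) (k : 'I_K) (dk : 'I_N) : Prop :=
  forall j : 'I_F,
    exists dec : ('I_N * 'I_F -> C) -> ('I_S -> C) -> C,
      forall W : 'I_N -> 'I_F -> C,
        dec (cache_content Zc k W) (fun t => dotC (h k) (transmit V W t))
        = W dk j.

(* A (K,L,M,N) multi-antenna coded caching scheme with subpacketization F
   and S transmissions (of subfile size 1/F each) for every demand: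
   demand-independent uncoded placement respecting the cache size M
   (i.e. at most M*F subfiles of size 1/F), and, for generic channels and
   every demand vector d, a precoded delivery of S slots decodable by all. *)
Definition mc_scheme (C : fieldType) (K L N F : nat) (M : rat) (S : nat) : Prop :=
  exists Zc : 'I_K -> {set 'I_N * 'I_F},
    (forall k, (#|Zc k|%:R <= M * F%:R :> rat)) /\
    forall h : 'I_K -> 'rV[C]_L, general_position h ->
    forall d : 'I_K -> 'I_N,
      exists V : 'I_S -> 'I_N -> 'I_F -> 'rV[C]_L,
        forall k, decodable Zc h V k (d k).

Definition delivery_time (S F : nat) : rat := S%:R / F%:R.

From HB Require Import structures.
From mathcomp Require Import all_boot all_order all_algebra.
Import Order.TTheory GRing.Theory Num.Theory.
Set Implicit Arguments. Unset Strict Implicit. Unset Printing Implicit Defensive.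
Local Open Scope ring_scope.

(* User k caches, of every file, the subfiles j with a star at (j, k).  In
   slot s the server sends, for every entry (j, u) equal to s, subfile j of the
   file requested by u, precoded by a vector orthogonal to the channels of the
   other users of A^(s) with a non-star in row j; by C4 there are at most L - 1
   of them, so generic channels admit such a vector.  A user k with s at
   (j, k) receives every other component (j', u) either zero-forced or as a
   subfile it caches (a star at (j', k)); by C3 its own component is the only
   one left, and it decodes it after subtracting the known interference. *)

Lemma dotC_sum (C : fieldType) L (h : 'rV[C]_L) (I : finType) (P : pred I)
    (f : I -> 'rV[C]_L) :
  dotC h (\sum_(i | P i) f i) = \sum_(i | P i) dotC h (f i).
Proof.
rewrite /dotC; under eq_bigr do rewrite summxE mulr_sumr.
exact: exchange_big.
Qed.

Lemma dotCZ (C : fieldType) L (h x : 'rV[C]_L) a :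
  dotC h (a *: x) = a * dotC h x.
Proof.
by rewrite /dotC mulr_sumr; apply: eq_bigr => i _; rewrite mxE mulrCA.
Qed.

Section EPDAScheme.

Variables (C : fieldType) (K L N F S : nat).
Variable A : 'I_F -> 'I_K -> option 'I_S.

Hypothesis A_col_uniq : forall (k : 'I_K) (j j' : 'I_F) (s : 'I_S),
  A j k = Some s -> A j' k = Some s -> j = j'.

Hypothesis A_row_bound : forall (s : 'I_S) (j : 'I_F),
  (exists k, A j k = Some s) ->
  (#|[set k : 'I_K | [exists j' : 'I_F, A j' k == Some s]
                     && (A j k != None)]| <= L)%N.

Definition epda_placement (k : 'I_K) : {set 'I_N * 'I_F} :=
  setX [set: 'I_N] [set j | A j k == None].

Definition interferers (s : 'I_S) (k : 'I_K) : {set 'I_K} :=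
  [set u | [&& u != k, [exists j', A j' u == Some s]
            & [exists j, (A j k == Some s) && (A j u != None)]]].

Lemma card_interferers s j k : A j k = Some s -> (#|interferers s k| <= L.-1)%N.
Proof.
move=> Ajk; set X := [set u | [exists j', A j' u == Some s] && (A j u != None)].
have kX : k \in X.
  by rewrite inE Ajk andbT; apply/existsP; exists j; rewrite Ajk.
have sub : interferers s k \subset X :\ k.
  apply/subsetP => u; rewrite !inE.
  case/and3P=> [-> -> /existsP[j2 /andP[/eqP A2 Au]]].
  by rewrite -(A_col_uniq A2 Ajk) Au.
apply: leq_trans (subset_leq_card sub) _.
have := A_row_bound (ex_intro _ k Ajk); rewrite -/X (cardsD1 k X) kX.
by case: (L).
Qed.

Variable h : 'I_K -> 'rV[C]_L.
Hypothesis h_gen : general_position h.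

Definition zero_forcing_at (s : 'I_S) (k : 'I_K) (x : 'rV[C]_L) :=
  (forall u, u \in interferers s k -> dotC (h u) x = 0) /\ dotC (h k) x != 0.

Definition zero_forcing (v : 'I_S -> 'I_K -> 'rV[C]_L) :=
  forall s j k, A j k = Some s -> zero_forcing_at s k (v s k).

Lemma zero_forcing_exists : exists v, zero_forcing v.
Proof.
have vsk s k : exists x, forall j, A j k = Some s -> zero_forcing_at s k x.
  have [j Ajk|noj] := pickP (fun j => A j k == Some s); last first.
    by exists 0 => j; move: (noj j) => /= /eqP ? ?.
  have [||x xP] := h_gen (U := interferers s k) (k := k).
  - exact: card_interferers (eqP Ajk).
  - by rewrite inE eqxx.
  by exists x.
have [v vP] := fin_all_exists (fun s => fin_all_exists (vsk s)).
by exists v => s j k /vP.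
Qed.

Section Delivery.

Variables (d : 'I_K -> 'I_N) (v : 'I_S -> 'I_K -> 'rV[C]_L).
Hypothesis vP : zero_forcing v.

Definition precoder (s : 'I_S) (n : 'I_N) (j : 'I_F) : 'rV[C]_L :=
  \sum_(k | (A j k == Some s) && (d k == n)) v s k.

Lemma transmit_precoder (W : 'I_N -> 'I_F -> C) s :
  transmit precoder W s =
  \sum_(p : 'I_F * 'I_K | A p.1 p.2 == Some s) W (d p.2) p.1 *: v s p.2.
Proof.
rewrite (eq_bigl (fun p => predT p.1 && (A p.1 p.2 == Some s))) //.
rewrite -(pair_big_dep predT (fun j u => A j u == Some s)
                       (fun j u => W (d u) j *: v s u)).
rewrite /transmit exchange_big; apply: eq_bigr => j _.
rewrite (partition_big d predT) //.
apply: eq_bigr => n _; rewrite /precoder scaler_sumr.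
by apply: eq_bigr => u /andP[_ /eqP ->].
Qed.

Lemma interference_cached (W : 'I_N -> 'I_F -> C) s j k (p : 'I_F * 'I_K) :
  A j k = Some s -> A p.1 p.2 = Some s -> p != (j, k) ->
  W (d p.2) p.1 * dotC (h k) (v s p.2) =
  cache_content epda_placement k W (d p.2, p.1) * dotC (h k) (v s p.2).
Proof.
case: p => j' u /= Ajk Aj'u neq.
rewrite /cache_content in_setX in_setT inE /=.
case Aj'k: (A j' k) => [s'|] //.
have uk : u != k.
  apply: contraNneq neq => ukE.
  by move: Aj'u; rewrite ukE => /A_col_uniq/(_ Ajk) ->.
have kI : k \in interferers s u.
  rewrite inE eq_sym uk /=; apply/andP; split; apply/existsP.
    by exists j; rewrite Ajk.
  by exists j'; rewrite Aj'u Aj'k eqxx.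
by rewrite (proj1 (vP Aj'u) k kI) !mulr0.
Qed.

Definition epda_decoder (k : 'I_K) (j : 'I_F) (s : 'I_S)
    (c : 'I_N * 'I_F -> C) (r : 'I_S -> C) : C :=
  (r s - \sum_(p : 'I_F * 'I_K | (A p.1 p.2 == Some s) && (p != (j, k)))
           c (d p.2, p.1) * dotC (h k) (v s p.2)) / dotC (h k) (v s k).

Lemma epda_decodable k : decodable epda_placement h precoder k (d k).
Proof.
move=> j; case Ajk: (A j k) => [s|]; last first.
  exists (fun c _ => c (d k, j)) => W.
  by rewrite /cache_content in_setX in_setT inE Ajk.
exists (epda_decoder k j s) => W.
rewrite /epda_decoder transmit_precoder dotC_sum (bigD1 (j, k)) ?Ajk //=.
under eq_bigr => p /andP[/eqP Ap neq] do
  rewrite dotCZ (interference_cached W Ajk Ap neq).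
by rewrite dotCZ addrK mulfK // (proj2 (vP Ajk)).
Qed.

End Delivery.

Lemma epda_delivery (d : 'I_K -> 'I_N) :
  exists V : 'I_S -> 'I_N -> 'I_F -> 'rV[C]_L,
    forall k, decodable epda_placement h V k (d k).
Proof.
have [v vP] := zero_forcing_exists.
by exists (precoder d v) => k; apply: epda_decodable.
Qed.

End EPDAScheme.

Theorem theorem1 (C : numClosedFieldType) (K L F Z S : nat) :
  (0 < K)%N -> (0 < L)%N -> (0 < F)%N -> (0 < Z)%N -> (0 < S)%N ->
  (L <= K)%N ->
  (exists A : 'I_F -> 'I_K -> option 'I_S, @EPDA K L F Z S A) ->
  forall N : nat, (0 < N)%N ->
    exists M : rat,
      [/\ 0 <= M <= N%:R,
          M / N%:R = Z%:R / F%:R &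
          @mc_scheme C K L N F M S].
Proof.
move=> K0 _ F0 _ _ _ [A [stars _ col_uniq row_bound]] N N0.
have ZF : (Z <= F)%N.
  by rewrite -(stars (Ordinal K0)) (leq_trans (max_card _)) ?card_ord.
have Fn0 : (F%:R : rat) != 0 by rewrite pnatr_eq0 -lt0n.
have Nn0 : (N%:R : rat) != 0 by rewrite pnatr_eq0 -lt0n.
exists (N%:R * Z%:R / F%:R); split.
- rewrite divr_ge0 ?mulr_ge0 //= ler_pdivrMr ?ltr0n // -!natrM ler_nat.
  exact: leq_mul.
- by rewrite mulrAC [_ * N%:R^-1]mulrAC mulfV // mul1r.
exists (epda_placement N A); split.
  by move=> k; rewrite cardsX cardsT card_ord stars divfK // natrM.
by move=> h h_gen d; apply: (epda_delivery col_uniq row_bound h_gen).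
Qed.
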